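(* If $L$ is a normal modal logic with the finite model property extending $K4$, then all monomorphisms in $L\mathbf{KFr}_{lf}$ are regular (equivalently, all epimorphisms in $\mathrm{Pro}L\mathbf{MA}_{fin}$ are regular).
   Context: $K4$ is the normal modal logic axiomatized by $\Box x\to\Box\Box x$. $L\mathbf{KFr}_{lf}$ is the category of locally finite Kripke frames validating $L$ (each point reaches only finitely many points via finite $\prec$-paths) with p-morphisms (maps $f$ with $w\prec w'\Rightarrow f(w)\prec f(w')$ and, if $f(w)\prec v'$, some $w'\succ w$ has $f(w')=v'$). $\mathrm{Pro}L\mathbf{MA}_{fin}$, the Pro-completion of finite $L$-algebras, is dually equivalent to $L\mathbf{KFr}_{lf}$. *)

From Stdlib Require Import List Relations.
Import ListNotations.

Inductive form : Type :=
| Var : nat -> form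
| Bot : form
| Imp : form -> form -> form
| Box : form -> form.

Fixpoint subst (s : nat -> form) (p : form) : form :=
  match p with
  | Var n => s n
  | Bot => Bot
  | Imp a b => Imp (subst s a) (subst s b)
  | Box a => Box (subst s a)
  end.

(* classical tautologies: boolean evaluation treating variables and
   boxed formulas as atoms *)
Fixpoint beval (v : form -> bool) (p : form) : bool :=
  match p with
  | Var n => v (Var n)
  | Bot => false
  | Imp a b => implb (beval v a) (beval v b)
  | Box a => v (Box a)
  end.

Definition tautology (p : form) : Prop := forall v, beval v p = true.

Definition logic := form -> Prop.

Definition normal_logic (L : logic) : Prop :=
  (forall p, tautology p -> L p) /\
  (forall p q, L (Imp (Box (Imp p q)) (Imp (Box p) (Box q)))) /\
  (forall p q, L p -> L (Imp p q) -> L q) /\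
  (forall p, L p -> L (Box p)) /\
  (forall s p, L p -> L (subst s p)).

Definition ax4 : form := Imp (Box (Var 0)) (Box (Box (Var 0))).

Definition extends_K4 (L : logic) : Prop := normal_logic L /\ L ax4.

Record frame : Type := Frame { W :> Type; R : W -> W -> Prop }.

Fixpoint sat (F : frame) (V : nat -> W F -> Prop) (w : W F) (p : form) : Prop :=
  match p with
  | Var n => V n w
  | Bot => False
  | Imp a b => sat F V w a -> sat F V w b
  | Box a => forall w', R F w w' -> sat F V w' a
  end.

Definition valid (F : frame) (p : form) : Prop :=
  forall V w, sat F V w p.

Definition validates (F : frame) (L : logic) : Prop :=
  forall p, L p -> valid F p.

Definition finite_type (T : Type) : Prop := exists l : list T, forall x, In x l.

Definition fmp (L : logic) : Prop :=
  forall p, ~ L p ->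
    exists F : frame, finite_type (W F) /\ validates F L /\ ~ valid F p.

Definition locally_finite (F : frame) : Prop :=
  forall w, exists l : list (W F),
    forall v, clos_refl_trans _ (R F) w v -> In v l.

Definition LKFr_lf (L : logic) (F : frame) : Prop :=
  locally_finite F /\ validates F L.

Definition pmorphism (F G : frame) (f : W F -> W G) : Prop :=
  (forall w w', R F w w' -> R G (f w) (f w')) /\
  (forall w v', R G (f w) v' -> exists w', R F w w' /\ f w' = v').

Definition mono_in (L : logic) (F G : frame) (f : W F -> W G) : Prop :=
  forall (H : frame), LKFr_lf L H ->
  forall g h : W H -> W F, pmorphism H F g -> pmorphism H F h ->
    (forall x, f (g x) = f (h x)) -> forall x, g x = h x.

Definition regular_mono_in (L : logic) (F G : frame) (f : W F -> W G) : Prop :=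
  exists (K : frame) (g h : W G -> W K),
    LKFr_lf L K /\ pmorphism G K g /\ pmorphism G K h /\
    (forall x, g (f x) = h (f x)) /\
    (forall (H : frame), LKFr_lf L H ->
     forall k : W H -> W G, pmorphism H G k ->
       (forall x, g (k x) = h (k x)) ->
       exists u : W H -> W F,
         pmorphism H F u /\ (forall x, f (u x) = k x) /\
         (forall u' : W H -> W F, pmorphism H F u' ->
            (forall x, f (u' x) = k x) -> forall x, u' x = u x)).

(* A monomorphism f : F -> G of locally finite L-frames is injective.  Since F
   is transitive (axiom 4) and locally finite, the strict-successor relation is
   well founded, so we may assume f injective on the strict successors of x.
   Two distinct points of the cluster of x identified by f would be separated
   by the automorphism of F swapping them; a point x' <> x with f x' = f x would
   be separated from the inclusion by the retraction of the subframe generated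
   by x' onto the upset of x.  An injective p-morphism is then the equalizer of
   the two embeddings of G into two copies of G glued along the image of f;
   this image is an upset, so the glued frame is a p-morphic image of the
   disjoint union G + G, hence again a locally finite L-frame. *)

From Stdlib Require Import List Relations FinFun.
From Stdlib Require Import Classical ClassicalEpsilon ProofIrrelevance Lia.
Import ListNotations.
Local Open Scope bool_scope.

Notation rt F := (clos_refl_trans _ (R F)).

Lemma sat_ext (F : frame) (V1 V2 : nat -> W F -> Prop) :
  (forall n w, V1 n w <-> V2 n w) -> forall p w, sat F V1 w p <-> sat F V2 w p.
Proof.
  intros HV p; induction p as [n| |p1 IH1 p2 IH2|p IH]; intros w; simpl.
  - apply HV.
  - tauto.
  - rewrite (IH1 w), (IH2 w); tauto.
  - split; intros Hs w' Hw; apply IH, Hs, Hw.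
Qed.

Lemma sat_pmorphism (H F : frame) (pi : W H -> W F) (V : nat -> W F -> Prop) :
  pmorphism H F pi ->
  forall p a, sat H (fun n x => V n (pi x)) a p <-> sat F V (pi a) p.
Proof.
  intros [Hforth Hback] p; induction p as [n| |p1 IH1 p2 IH2|p IH]; intros a; simpl.
  - tauto.
  - tauto.
  - rewrite (IH1 a), (IH2 a); tauto.
  - split.
    + intros Hs v Hv. destruct (Hback a v Hv) as [w [Hw <-]]. apply IH, Hs, Hw.
    + intros Hs w Hw. apply IH, Hs, Hforth, Hw.
Qed.

Lemma validates_pmorphic_image (H F : frame) (pi : W H -> W F) (L : logic) :
  pmorphism H F pi -> (forall y, exists x, pi x = y) ->
  validates H L -> validates F L.
Proof.
  intros Hpi Hsurj HL p Lp V y. destruct (Hsurj y) as [x <-].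
  apply (sat_pmorphism H F pi V Hpi), HL, Lp.
Qed.

Lemma pmorphism_comp (F G H : frame) (f : W F -> W G) (g : W G -> W H) :
  pmorphism F G f -> pmorphism G H g -> pmorphism F H (fun x => g (f x)).
Proof.
  intros [Hff Hfb] [Hgf Hgb]. split.
  - auto.
  - intros w v Hv. destruct (Hgb (f w) v Hv) as [y [Hy <-]].
    destruct (Hfb w y Hy) as [w' [Hw' <-]]. eauto.
Qed.

Lemma pmorphism_id (F : frame) : pmorphism F F (fun x => x).
Proof. split; eauto. Qed.

Lemma transitive_of_valid_ax4 (F : frame) : valid F ax4 -> transitive _ (R F).
Proof.
  intros Hv x y z Hxy Hyz.
  exact (Hv (fun _ w => R F x w) x (fun w Hw => Hw) y Hxy z Hyz).
Qed.

Lemma LKFr_lf_transitive (L : logic) (F : frame) :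
  extends_K4 L -> LKFr_lf L F -> transitive _ (R F).
Proof. intros [_ L4] [_ HF]. apply transitive_of_valid_ax4, HF, L4. Qed.

Lemma rt_transitive_cases (F : frame) : transitive _ (R F) ->
  forall x y, rt F x y -> x = y \/ R F x y.
Proof.
  intros T x y Hxy; induction Hxy as [x y Hxy|x|x y z _ [<-|Hxy] _ [<-|Hyz]]; eauto.
Qed.

Lemma rt_step_r (F : frame) (x y z : W F) : rt F x y -> R F y z -> rt F x z.
Proof. intros; eapply rt_trans; [eassumption | apply rt_step; assumption]. Qed.

Lemma rt_pmorphism_forth (H F : frame) (pi : W H -> W F) :
  (forall a b, R H a b -> R F (pi a) (pi b)) ->
  forall a b, rt H a b -> rt F (pi a) (pi b).
Proof.
  intros Hforth a b Hab; induction Hab.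
  - apply rt_step; auto.
  - apply rt_refl.
  - eapply rt_trans; eauto.
Qed.

Lemma rt_pmorphism_back (F G : frame) (f : W F -> W G) : pmorphism F G f ->
  forall x v, rt G (f x) v -> exists y, rt F x y /\ f y = v.
Proof.
  intros [_ Hback] x v Hv. apply clos_rt_rt1n in Hv.
  remember (f x) as fx eqn:Efx. revert x Efx.
  induction Hv as [u|u u' v Hu _ IH]; intros x ->.
  - exists x. split; [apply rt_refl | reflexivity].
  - destruct (Hback x u' Hu) as [x' [Hx' <-]].
    destruct (IH x' eq_refl) as [y [Hy <-]].
    exists y. split; [eapply rt_trans; [apply rt_step|]; eauto | reflexivity].
Qed.

Lemma sig_eq {A : Type} {P : A -> Prop} (a b : {x | P x}) :
  proj1_sig a = proj1_sig b -> a = b.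
Proof. destruct a, b; simpl; intros ->; f_equal; apply proof_irrelevance. Qed.

Definition gen (F : frame) (x : W F) : frame :=
  Frame {y | rt F x y} (fun a b => R F (proj1_sig a) (proj1_sig b)).

Definition gen_root (F : frame) (x : W F) : W (gen F x) := exist _ x (rt_refl _ _ _).

Lemma gen_incl_pmorphism (F : frame) (x : W F) :
  pmorphism (gen F x) F (@proj1_sig _ _).
Proof.
  split.
  - auto.
  - intros [w Hw] v Hv. exists (exist _ v (rt_step_r F x w v Hw Hv)). auto.
Qed.

Lemma gen_validates (L : logic) (F : frame) (x : W F) :
  validates F L -> validates (gen F x) L.
Proof.
  intros HL p Lp V s.
  set (V' := fun n y => forall Hy : rt F x y, V n (exist _ y Hy)).
  apply (sat_ext (gen F x) (fun n a => V' n (proj1_sig a)) V).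
  - intros n [y Hy]; unfold V'; simpl; split; [auto|].
    intros HV Hy'. rewrite (proof_irrelevance _ Hy' Hy). exact HV.
  - apply (sat_pmorphism _ F _ V' (gen_incl_pmorphism F x)), HL, Lp.
Qed.

Lemma gen_locally_finite (F : frame) (x : W F) :
  locally_finite F -> locally_finite (gen F x).
Proof.
  intros Hlf [y Hy]. destruct (Hlf y) as [l Hl].
  exists (flat_map (fun z => match excluded_middle_informative (rt F x z) with
                             | left Hz => [exist _ z Hz]
                             | right _ => []
                             end) l).
  intros [v Hv] Hyv. apply in_flat_map. exists v. split.
  - apply Hl, (rt_pmorphism_forth (gen F x) F (@proj1_sig _ _) (fun a b H => H) _ _ Hyv).
  - destruct (excluded_middle_informative _) as [Hv'|]; [|contradiction].
    left. apply sig_eq. reflexivity.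
Qed.

Lemma LKFr_lf_gen (L : logic) (F : frame) (x : W F) :
  LKFr_lf L F -> LKFr_lf L (gen F x).
Proof.
  intros [Hlf HL]. split; [apply gen_locally_finite | apply gen_validates]; auto.
Qed.

Definition strict_succ (F : frame) (a b : W F) : Prop := R F b a /\ ~ R F a b.

Lemma Acc_strict_succ (F : frame) : transitive _ (R F) -> locally_finite F ->
  forall x, Acc (strict_succ F) x.
Proof.
  intros T Hlf.
  assert (Hcover : forall n (l : list (W F)) y, length l <= n ->
            (forall z, rt F y z -> In z l) -> Acc (strict_succ F) y).
  { induction n as [|n IH]; intros l y Hlen Hl.
    - destruct l; [|simpl in Hlen; lia]. destruct (Hl y (rt_refl _ _ _)).
    - constructor. intros z [Hyz Hzy].
      destruct (in_split y l (Hl y (rt_refl _ _ _))) as [l1 [l2 ->]].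
      (* the upset of z is covered by l without y, since z does not see y *)
      apply (IH (l1 ++ l2)).
      + rewrite length_app in *; simpl in Hlen; lia.
      + intros w Hzw. specialize (Hl w (rt_trans _ _ _ _ _ (rt_step _ _ _ _ Hyz) Hzw)).
        apply in_app_iff in Hl as [|[<-|]]; apply in_app_iff; auto.
        destruct (rt_transitive_cases F T z y Hzw) as [<-|]; contradiction. }
  intros x. destruct (Hlf x) as [l Hl]. exact (Hcover _ l x (le_n _) Hl).
Qed.

Lemma rt_not_strict_succ (F : frame) : transitive _ (R F) ->
  forall x a, rt F x a -> ~ strict_succ F a x -> a = x \/ (R F x a /\ R F a x).
Proof.
  intros T x a Ha Hna.
  destruct (rt_transitive_cases F T x a Ha) as [<-|Hxa]; [auto|].
  right. split; [exact Hxa|]. apply NNPP. intros Hax. apply Hna. split; auto.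
Qed.

Definition swap {A : Type} (c c' y : A) : A :=
  if excluded_middle_informative (y = c) then c'
  else if excluded_middle_informative (y = c') then c else y.

Lemma swap_involutive {A : Type} (c c' y : A) : swap c c' (swap c c' y) = y.
Proof. unfold swap; repeat destruct excluded_middle_informative; subst; congruence. Qed.

Lemma pmorphism_cluster_involution (F : frame) (s : W F -> W F) :
  transitive _ (R F) ->
  (forall y, s y = y \/ (R F y (s y) /\ R F (s y) y)) -> (forall y, s (s y) = y) ->
  pmorphism F F s.
Proof.
  intros T Hs Hinv.
  assert (Hforth : forall a b, R F a b -> R F (s a) (s b)).
  { intros a b Hab.
    assert (Hsab : R F (s a) b) by (destruct (Hs a) as [->|[_ ?]]; eauto).
    destruct (Hs b) as [->|[? _]]; eauto. }
  split; [exact Hforth|].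
  intros a v Hv. exists (s v). split; [|apply Hinv].
  rewrite <- (Hinv a). apply Hforth, Hv.
Qed.

Lemma pmorphism_swap_cluster (F : frame) (c c' : W F) :
  transitive _ (R F) -> R F c c' -> R F c' c -> pmorphism F F (swap c c').
Proof.
  intros T Hcc' Hc'c. apply pmorphism_cluster_involution; [exact T | | apply swap_involutive].
  intros y. unfold swap.
  destruct excluded_middle_informative as [->|]; [auto|].
  destruct excluded_middle_informative as [->|]; auto.
Qed.

Lemma upset_retraction (F G : frame) (f : W F -> W G) (x1 x2 : W F) :
  pmorphism F G f ->
  (forall a b, rt F x1 a -> rt F x1 b -> f a = f b -> a = b) ->
  f x2 = f x1 ->
  exists r : W (gen F x2) -> W F,
    pmorphism (gen F x2) F r /\ (forall s, f (r s) = f (proj1_sig s)) /\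
    r (gen_root F x2) = x1.
Proof.
  intros Hf Hinj E.
  assert (Hlift : forall s : W (gen F x2), exists z, rt F x1 z /\ f z = f (proj1_sig s)).
  { intros [y Hy]. apply (rt_pmorphism_back F G f Hf). rewrite <- E.
    exact (rt_pmorphism_forth F G f (proj1 Hf) _ _ Hy). }
  set (r := fun s => proj1_sig (constructive_indefinite_description _ (Hlift s))).
  assert (Hr : forall s, rt F x1 (r s) /\ f (r s) = f (proj1_sig s)).
  { intros s. unfold r. destruct constructive_indefinite_description as [z Hz]. exact Hz. }
  destruct Hf as [Hforth Hback].
  exists r. split; [split|split].
  - intros s s' Hss'. destruct (Hr s) as [Hs Es], (Hr s') as [Hs' Es'].
    pose proof (Hforth _ _ Hss') as Hfss'. simpl in Hfss'. rewrite <- Es, <- Es' in Hfss'.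
    destruct (Hback _ _ Hfss') as [w [Hw Ew]].
    rewrite <- (Hinj w (r s') (rt_step_r F _ _ _ Hs Hw) Hs' Ew). exact Hw.
  - intros s v Hv. destruct (Hr s) as [Hs Es].
    pose proof (Hforth _ _ Hv) as Hfv. rewrite Es in Hfv.
    destruct (Hback _ _ Hfv) as [y [Hy Ey]].
    set (s' := exist _ y (rt_step_r F _ _ _ (proj2_sig s) Hy) : W (gen F x2)).
    exists s'. split; [exact Hy|]. destruct (Hr s') as [Hs' Es'].
    apply Hinj; [exact Hs' | exact (rt_step_r F _ _ _ Hs Hv) | rewrite Es'; exact Ey].
  - intros s. apply Hr.
  - destruct (Hr (gen_root F x2)) as [H0 E0].
    apply Hinj; [exact H0 | apply rt_refl | rewrite E0; exact E].
Qed.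

Section MonoInjective.

Variables (L : logic) (F G : frame) (f : W F -> W G).
Hypotheses (HF : LKFr_lf L F) (Hf : pmorphism F G f) (Hmono : mono_in L F G f).
Hypothesis (T : transitive _ (R F)).

Lemma mono_injective_on_cluster (c c' : W F) :
  R F c c' -> R F c' c -> f c = f c' -> c = c'.
Proof.
  intros Hcc' Hc'c E.
  assert (Hfs : forall y, f y = f (swap c c' y)).
  { intros y. unfold swap. repeat destruct excluded_middle_informative; congruence. }
  pose proof (Hmono F HF _ _ (pmorphism_id F) (pmorphism_swap_cluster F c c' T Hcc' Hc'c)
                Hfs c) as Ec.
  unfold swap in Ec. destruct excluded_middle_informative; congruence.
Qed.

Lemma mono_injective_from_upset (x1 x2 : W F) :
  (forall a b, rt F x1 a -> rt F x1 b -> f a = f b -> a = b) -> f x2 = f x1 -> x2 = x1.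
Proof.
  intros Hinj E.
  destruct (upset_retraction F G f x1 x2 Hf Hinj E) as [r [Hr [Efr Er]]].
  rewrite <- Er.
  exact (Hmono _ (LKFr_lf_gen L F x2 HF) _ _ (gen_incl_pmorphism F x2) Hr
           (fun s => eq_sym (Efr s)) (gen_root F x2)).
Qed.

Lemma mono_injective : Injective f.
Proof.
  intros x1. induction (Acc_strict_succ F T (proj1 HF) x1) as [x1 _ IH].
  intros x2 E. symmetry. apply mono_injective_from_upset; [|symmetry; exact E].
  intros a b Ha Hb Eab.
  destruct (classic (strict_succ F a x1)) as [Sa|Sa]; [exact (IH a Sa b Eab)|].
  destruct (classic (strict_succ F b x1)) as [Sb|Sb]; [symmetry; exact (IH b Sb a (eq_sym Eab))|].
  destruct (rt_not_strict_succ F T x1 a Ha Sa) as [->|[Ha1 Ha2]],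
           (rt_not_strict_succ F T x1 b Hb Sb) as [->|[Hb1 Hb2]];
    [reflexivity | | | ]; apply mono_injective_on_cluster; eauto.
Qed.

End MonoInjective.

Lemma injective_pmorphism_reflects (F G : frame) (f : W F -> W G) :
  pmorphism F G f -> Injective f -> forall a b, R G (f a) (f b) -> R F a b.
Proof.
  intros [_ Hback] Hinj a b Hab. destruct (Hback a _ Hab) as [w [Hw Ew]].
  rewrite <- (Hinj _ _ Ew). exact Hw.
Qed.

Lemma pmorphism_factor_injective (H F G : frame) (f : W F -> W G) (k : W H -> W G)
  (u : W H -> W F) :
  pmorphism F G f -> Injective f -> pmorphism H G k -> (forall x, f (u x) = k x) ->
  pmorphism H F u.
Proof.
  intros Hf Hinj [Hkf Hkb] Hu. split.
  - intros a b Hab. apply (injective_pmorphism_reflects F G f Hf Hinj).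
    rewrite !Hu. apply Hkf, Hab.
  - intros a w Hw. pose proof (proj1 Hf _ _ Hw) as Hfw. rewrite Hu in Hfw.
    destruct (Hkb a _ Hfw) as [a' [Ha' Ea']]. exists a'. split; [exact Ha'|].
    apply Hinj. rewrite Hu. exact Ea'.
Qed.

Definition doubled (G : frame) : frame :=
  Frame (W G * bool) (fun a b => R G (fst a) (fst b) /\ snd a = snd b).

Lemma pmorphism_copy (G : frame) (b : bool) : pmorphism G (doubled G) (fun y => (y, b)).
Proof.
  split.
  - simpl; auto.
  - intros w [v b'] [Hv Eb]. simpl in *. subst b'. exists v. auto.
Qed.

Lemma doubled_validates (L : logic) (G : frame) : validates G L -> validates (doubled G) L.
Proof.
  intros HG p Lp V [y b].
  apply (sat_pmorphism G _ _ V (pmorphism_copy G b)), HG, Lp.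
Qed.

Section Gluing.

Variables (F G : frame) (f : W F -> W G).

Definition in_image (y : W G) : bool :=
  if excluded_middle_informative (exists x, f x = y) then true else false.

Lemma in_imageP (y : W G) : in_image y = true <-> exists x, f x = y.
Proof. unfold in_image. destruct excluded_middle_informative; intuition congruence. Qed.

(* Two copies of G, tagged false and true, glued along the image of f: the
   tag true is only allowed outside the image. *)
Definition glued : frame :=
  Frame {p : W G * bool | snd p = true -> in_image (fst p) = false}
    (fun a b => R G (fst (proj1_sig a)) (fst (proj1_sig b)) /\
       snd (proj1_sig b) = snd (proj1_sig a) && negb (in_image (fst (proj1_sig b)))).

Lemma glue_proof (y : W G) (b : bool) : b && negb (in_image y) = true -> in_image y = false.
Proof. destruct b, (in_image y); simpl; congruence. Qed.

Definition glue (p : W (doubled G)) : W glued :=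
  exist _ (fst p, snd p && negb (in_image (fst p))) (glue_proof (fst p) (snd p)).

Lemma glue_surjective (k : W glued) : glue (proj1_sig k) = k.
Proof.
  destruct k as [[y [|]] Hk]; apply sig_eq; simpl in *; [rewrite (Hk eq_refl)|]; reflexivity.
Qed.

Hypothesis Hf : pmorphism F G f.

Lemma in_image_up (y y' : W G) : in_image y = true -> R G y y' -> in_image y' = true.
Proof.
  rewrite !in_imageP. intros [x <-] Hy'.
  destruct (proj2 Hf x y' Hy') as [w [_ Ew]]. eauto.
Qed.

Lemma glue_tag_step (y y' : W G) (b : bool) : R G y y' ->
  b && negb (in_image y) && negb (in_image y') = b && negb (in_image y').
Proof.
  intros Hyy'. destruct (in_image y) eqn:Ey.
  - rewrite (in_image_up y y' Ey Hyy'). destruct b; reflexivity.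
  - destruct b; reflexivity.
Qed.

Lemma pmorphism_glue : pmorphism (doubled G) glued glue.
Proof.
  split.
  - intros [w a] [w' a'] [Hw Ea]. simpl in *. subst a'. split; [exact Hw|].
    symmetry. apply glue_tag_step, Hw.
  - intros [w a] [[v b] Hb] [Hv Eb]. simpl in *. exists (v, a). split; [simpl; auto|].
    apply sig_eq. simpl. rewrite Eb, (glue_tag_step w v a Hv). reflexivity.
Qed.

Lemma pmorphism_glue_copy (b : bool) : pmorphism G glued (fun y => glue (y, b)).
Proof. exact (pmorphism_comp _ _ _ _ _ (pmorphism_copy G b) pmorphism_glue). Qed.

Lemma glued_locally_finite : locally_finite G -> locally_finite glued.
Proof.
  intros HG k. destruct (HG (fst (proj1_sig k))) as [l Hl].
  exists (flat_map (fun y => [glue (y, true); glue (y, false)]) l).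
  intros k' Hkk'. apply in_flat_map. exists (fst (proj1_sig k')). split.
  - apply Hl. exact (rt_pmorphism_forth glued G (fun k => fst (proj1_sig k))
                       (fun a b H => proj1 H) _ _ Hkk').
  - rewrite <- (glue_surjective k'). destruct (proj1_sig k') as [y [|]]; simpl; auto.
Qed.

Lemma LKFr_lf_glued (L : logic) : LKFr_lf L G -> LKFr_lf L glued.
Proof.
  intros [Hlf HL]. split; [exact (glued_locally_finite Hlf)|].
  apply (validates_pmorphic_image _ _ glue L pmorphism_glue).
  - intros k. exists (proj1_sig k). apply glue_surjective.
  - apply doubled_validates, HL.
Qed.

Lemma glue_copies_eq (y : W G) : glue (y, false) = glue (y, true) <-> in_image y = true.
Proof.
  split.
  - intros E. apply (f_equal (fun k => snd (proj1_sig k))) in E. simpl in E.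
    destruct (in_image y); [reflexivity | discriminate].
  - intros Ey. apply sig_eq. simpl. rewrite Ey. reflexivity.
Qed.

Lemma injective_pmorphism_regular_mono (L : logic) :
  LKFr_lf L G -> Injective f -> regular_mono_in L F G f.
Proof.
  intros HG Hinj.
  exists glued, (fun y => glue (y, false)), (fun y => glue (y, true)).
  split; [exact (LKFr_lf_glued L HG)|].
  split; [apply pmorphism_glue_copy|]. split; [apply pmorphism_glue_copy|].
  split; [intros x; apply glue_copies_eq, in_imageP; eauto|].
  intros H _ k Hk Ek.
  assert (Hpre : forall x, exists x', f x' = k x) by (intros x; apply in_imageP, glue_copies_eq, Ek).
  set (u := fun x => proj1_sig (constructive_indefinite_description _ (Hpre x))).
  assert (Hu : forall x, f (u x) = k x).
  { intros x. unfold u. destruct constructive_indefinite_description as [x' Hx']. exact Hx'. }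
  exists u. split; [exact (pmorphism_factor_injective H F G f k u Hf Hinj Hk Hu)|].
  split; [exact Hu|].
  intros u' _ Hu' x. apply Hinj. rewrite Hu, Hu'. reflexivity.
Qed.

End Gluing.

Theorem proposition5p8 :
  forall L : logic, extends_K4 L -> fmp L ->
  forall (F G : frame), LKFr_lf L F -> LKFr_lf L G ->
  forall f : W F -> W G, pmorphism F G f ->
    mono_in L F G f -> regular_mono_in L F G f.
Proof.
  intros L HK _ F G HF HG f Hf Hmono.
  apply (injective_pmorphism_regular_mono F G f Hf L HG).
  exact (mono_injective L F G f HF Hf Hmono (LKFr_lf_transitive L F HK HF)).
Qed.
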